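(* Let $k\ge2$ and let $\tau(x,y,h,b_1)$ be the formula $\alpha(x)\wedge\alpha(y)\wedge([h,b_1]=e)\wedge\beta(b_1)\wedge\forall v\,\forall w\,\big([v,b_1]=[w,b_1]=e\wedge\gamma(h,v,w,b_1)\rightarrow\exists u\,(\alpha(u)\wedge[v,y]=[w,x][v,[u,v]])\big)$, where $\alpha(x)=\forall y\,([y^{-1}xy,x]=e)$, $\beta(y)=\forall x\,(\alpha(x)\rightarrow y^{-1}xy=x^k)$, and $\gamma(x,y,z,t)$ is a group formula such that for every $b_1\in Ab$ and all $n,l,m\in\mathbb{Z}$, $BS(1,k)\models\gamma(b_1^n,b_1^l,b_1^m,b_1)$ iff $nl=m$. If $a_1\in A$ and $b_1\in Ab$, then for all $u,h\in BS(1,k)$: $BS(1,k)\models\tau(a_1,u,h,b_1)$ if and only if there exists $z\in\mathbb{Z}$ with $u=a_1^z$ and $h=b_1^z$.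
   Context: $BS(1,k)=\langle a,b\mid b^{-1}ab=a^k\rangle$, identified with $\mathbb{Z}[1/k]\rtimes\mathbb{Z}$ (pairs $(y,m)$, $y\in\mathbb{Z}[1/k]=\{zk^i:z,i\in\mathbb{Z}\}$, product $(y_1,m_1)(y_2,m_2)=(y_1+y_2k^{-m_1},m_1+m_2)$), with $a=(1,0)$, $b=(0,1)$; $a^y=(y,0)$. $A=\{a^y: y\in\mathbb{Z}[1/k]\}$ (the normal closure of $a$) and $Ab=\{a^yb:y\in\mathbb{Z}[1/k]\}$. The commutator is $[x,y]=x^{-1}y^{-1}xy$. *)

(* BS(1,k) = Z[1/k] ⋊ Z realised concretely on rat * int. *)
From HB Require Import structures.
From mathcomp Require Import all_boot all_order all_algebra.
Set Implicit Arguments. Unset Strict Implicit. Unset Printing Implicit Defensive.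
Import Order.TTheory GRing.Theory Num.Theory.
Local Open Scope ring_scope.

(* ambient carrier; the group BS(1,k) is the subset [BSel k] *)
Definition G : Type := (rat * int)%type.

Definition Zk (k : nat) (y : rat) : Prop :=
  exists (z i : int), y = z%:~R * (k%:R : rat) ^ i.

Definition BSel (k : nat) (g : G) : Prop := Zk k g.1.

Definition bsmul (k : nat) (g h : G) : G :=
  (g.1 + h.1 * (k%:R : rat) ^ (- g.2), g.2 + h.2).
Definition bsone : G := (0, 0).
Definition bsinv (k : nat) (g : G) : G :=
  (- (g.1 * (k%:R : rat) ^ g.2), - g.2).

Definition bspow (k : nat) (g : G) (n : int) : G :=
  match n with
  | Posz m => iter m (bsmul k g) bsone
  | Negz m => bsinv k (iter m.+1 (bsmul k g) bsone)
  end.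

Definition bscomm (k : nat) (x y : G) : G :=
  bsmul k (bsmul k (bsinv k x) (bsinv k y)) (bsmul k x y).
Definition bsconj (k : nat) (x y : G) : G :=
  bsmul k (bsmul k (bsinv k y) x) y.

Definition bs_a (y : rat) : G := (y, 0).
Definition bs_b : G := (0, 1).

Definition InA (k : nat) (g : G) : Prop := exists y, Zk k y /\ g = bs_a y.
Definition InAb (k : nat) (g : G) : Prop :=
  exists y, Zk k y /\ g = bsmul k (bs_a y) bs_b.

Definition alpha (k : nat) (x : G) : Prop :=
  forall y, BSel k y -> bscomm k (bsconj k x y) x = bsone.

Definition beta (k : nat) (y : G) : Prop :=
  forall x, BSel k x -> alpha k x -> bsconj k x y = bspow k x (Posz k).

Definition tau (k : nat) (gamma : G -> G -> G -> G -> Prop) (x y h b1 : G) : Prop :=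
  alpha k x /\ alpha k y /\ bscomm k h b1 = bsone /\ beta k b1 /\
  (forall v, BSel k v -> forall w, BSel k w ->
     bscomm k v b1 = bsone -> bscomm k w b1 = bsone -> gamma h v w b1 ->
     exists u, BSel k u /\ alpha k u /\
       bscomm k v y = bsmul k (bscomm k w x) (bscomm k v (bscomm k u v))).

From mathcomp Require Import all_boot all_order all_algebra.
From mathcomp Require Import ring zify.
Import GRing.Theory Num.Theory.
Set Implicit Arguments. Unset Strict Implicit. Unset Printing Implicit Defensive.
Local Open Scope ring_scope.

(* Write a1 = (c, 0) and b1 = (y, 1). Then alpha(x) says that x lies in A, and h
   commutes with b1 exactly when h = b1^z for z the second coordinate of h. For
   v = b1^l, w = b1^(z l), u = a^t and a witness a^s, the identity
   [v, u] = [w, a1] [v, [a^s, v]] reads t (1 - X) = c (1 - X^z) - s (1 - X)^2 with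
   X = k^l. As 1 - X^z = z (1 - X) modulo (1 - X)^2 in Z[1/k], it has a solution
   s in Z[1/k] iff 1 - X divides t - c z in Z[1/k]. So tau forces t - c z to be
   divisible by every k^l - 1, which is coprime to k and eventually exceeds the
   numerator of t - c z, hence t = c z; conversely t = c z makes every such
   identity solvable. *)

Section BaumslagSolitar.
Variable k : nat.
Hypothesis k_ge2 : (2 <= k)%N.
Local Notation K := (k%:R : rat).

Lemma K_neq0 : K != 0. Proof. by rewrite pnatr_eq0; case: k k_ge2. Qed.
Lemma K_neq1 : K != 1. Proof. by rewrite pnatr_eq1; case: k k_ge2 => [|[]]. Qed.
Lemma K_sub1_neq0 : K - 1 != 0. Proof. by rewrite subr_eq0 K_neq1. Qed.
Lemma expK_neq0 (i : int) : K ^ i != 0. Proof. exact: expfz_neq0 K_neq0. Qed.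

Lemma expK_eq1 (i : int) : K ^ i = 1 -> i = 0.
Proof.
have pK1 (n : nat) : K ^+ n = 1 -> n = 0%N.
  by move/eqP; rewrite pexprn_eq1 ?ler0n // (negbTE K_neq1) orbF => /eqP.
case: i => n /= => [/pK1 -> // | /eqP].
by rewrite invr_eq1 => /eqP /pK1.
Qed.

Lemma ZkP y : Zk k y <-> exists n : nat, y * K ^+ n \is a Num.int.
Proof.
have Kn_neq0 (n : nat) : K ^+ n != 0 by exact: expf_neq0 K_neq0.
split=> [[z [[] n ->]] | [n /intrP [z Hz]]].
- by exists 0%N; rewrite expr0 mulr1 rpredM ?intr_int // rpredX // natr_int.
- by exists n.+1; rewrite /= mulfVK ?intr_int.
- by exists z, (- (n : int)); rewrite -exprnN -Hz mulfK.
Qed.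

Lemma Zk_int (z : int) : Zk k z%:~R.
Proof. by exists z, 0; rewrite expr0z mulr1. Qed.

Lemma Zk1 : Zk k 1.
Proof. exact: (Zk_int 1). Qed.

Lemma Zk_expK (i : int) : Zk k (K ^ i).
Proof. by exists 1, i; rewrite mul1r. Qed.

Lemma Zk_expK_inv (i : int) : Zk k (K ^ i)^-1.
Proof. by rewrite invr_expz; exact: Zk_expK. Qed.

Lemma Zk_add x y : Zk k x -> Zk k y -> Zk k (x + y).
Proof.
move=> /ZkP [n Hn] /ZkP [m Hm]; apply/ZkP; exists (n + m)%N.
have -> : (x + y) * K ^+ (n + m) = (x * K ^+ n) * K ^+ m + (y * K ^+ m) * K ^+ n.
  by rewrite exprD; ring.
by rewrite rpredD // rpredM // rpredX // natr_int.
Qed.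

Lemma Zk_mul x y : Zk k x -> Zk k y -> Zk k (x * y).
Proof.
move=> /ZkP [n Hn] /ZkP [m Hm]; apply/ZkP; exists (n + m)%N.
have -> : (x * y) * K ^+ (n + m) = (x * K ^+ n) * (y * K ^+ m).
  by rewrite exprD; ring.
by rewrite rpredM.
Qed.

Lemma Zk_opp x : Zk k x -> Zk k (- x).
Proof. by case=> z [i ->]; exists (- z), i; rewrite rmorphN mulNr. Qed.

Lemma Zk_sub x y : Zk k x -> Zk k y -> Zk k (x - y).
Proof. by move=> Zx Zy; apply/Zk_add/Zk_opp. Qed.

Lemma Zk_expz X (z : int) : Zk k X -> Zk k X^-1 -> Zk k (X ^ z).
Proof.
have Zk_exprn Y (n : nat) : Zk k Y -> Zk k (Y ^+ n).
  by move=> ZY; elim: n => [|n IH]; [exact: Zk1 | rewrite exprS; exact: Zk_mul].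
case: z => n ZX ZXinv; first exact: (Zk_exprn X n).
by rewrite /exprz -exprVn; apply: Zk_exprn.
Qed.

Definition dvdZk (d x : rat) := exists2 q, Zk k q & x = d * q.

Lemma dvdZk0 d : dvdZk d 0.
Proof. by exists 0; [exact: (Zk_int 0) | rewrite mulr0]. Qed.

Lemma dvdZkD d x y : dvdZk d x -> dvdZk d y -> dvdZk d (x + y).
Proof. by case=> p Zp -> [q Zq ->]; exists (p + q); [exact: Zk_add | rewrite mulrDr]. Qed.

Lemma dvdZkB d x y : dvdZk d x -> dvdZk d y -> dvdZk d (x - y).
Proof. by case=> p Zp -> [q Zq ->]; exists (p - q); [exact: Zk_sub | rewrite mulrBr]. Qed.

Lemma dvdZk_int_ind d (f : int -> rat) :
  dvdZk d (f 0) -> (forall z, dvdZk d (f (z + 1) - f z)) -> forall z, dvdZk d (f z).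
Proof.
move=> f0 fS; elim/int_rec => // n IH.
  by rewrite -[f _](subrK (f n)) -addn1 PoszD; apply/dvdZkD.
have -> : f (- n.+1%:Z) = f (- n%:Z) - (f (- n.+1%:Z + 1) - f (- n.+1%:Z)).
  by rewrite (_ : - n.+1%:Z + 1 = - n%:Z); [ring | lia].
exact/dvdZkB.
Qed.

Section ZkUnit.
Variable X : rat.
Hypotheses (X_neq0 : X != 0) (Zk_X : Zk k X) (Zk_Xinv : Zk k X^-1).

Lemma dvdZk_expz_sub1 (z : int) : dvdZk (X - 1) (X ^ z - 1).
Proof.
apply: (@dvdZk_int_ind _ (fun z => X ^ z - 1)) => [|{}z] /=.
  by rewrite expr0z subrr; exact: dvdZk0.
exists (X ^ z); first exact: Zk_expz.
by rewrite expfzDr // expr1z; ring.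
Qed.

Lemma dvdZk_expz_linear (z : int) :
  dvdZk ((1 - X) ^+ 2) (1 - X ^ z - z%:~R * (1 - X)).
Proof.
apply: (@dvdZk_int_ind _ (fun z => 1 - X ^ z - z%:~R * (1 - X))) => [|{}z] /=.
  by rewrite expr0z subrr mul0r subr0; exact: dvdZk0.
have [p Zp Ep] := dvdZk_expz_sub1 z.
exists (- p); first exact: Zk_opp.
by rewrite expfzDr // expr1z rmorphD /=; rewrite -[X ^ z](subrK 1) Ep; ring.
Qed.

Lemma dvdZk_of_commutator_eqn c t s (z : int) : X != 1 -> Zk k c -> Zk k s ->
  t * (1 - X) = c * (1 - X ^ z) - s * (1 - X) ^+ 2 -> dvdZk (1 - X) (t - c * z%:~R).
Proof.
move=> X_neq1 Zc Zs E; have [q Zq Eq] := dvdZk_expz_linear z.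
exists (c * q - s); first by apply/Zk_sub/Zs/Zk_mul.
have X1_neq0 : 1 - X != 0 by rewrite subr_eq0 eq_sym.
apply: (mulIf X1_neq0); rewrite mulrBl E.
have -> : c * (1 - X ^ z) = c * (z%:~R * (1 - X) + (1 - X) ^+ 2 * q) by rewrite -Eq; ring.
ring.
Qed.

Lemma commutator_eqn_solvable c (z : int) : Zk k c ->
  exists2 s, Zk k s & c * z%:~R * (1 - X) = c * (1 - X ^ z) - s * (1 - X) ^+ 2.
Proof.
move=> Zc; have [q Zq Eq] := dvdZk_expz_linear z.
exists (c * q); first exact: Zk_mul.
have -> : c * (1 - X ^ z) = c * (z%:~R * (1 - X) + (1 - X) ^+ 2 * q) by rewrite -Eq; ring.
ring.
Qed.
End ZkUnit.

Lemma dvdn_expn_sub1_small (a l m : nat) :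
  (a < l)%N -> (k ^ l - 1 %| a * k ^ m)%N -> a = 0%N.
Proof.
move=> lt_al dvd_a.
have k_gt0 : (0 < k)%N by case: k k_ge2.
have coprime_km : coprime (k ^ l - 1) (k ^ m).
  apply/coprimeXr/(@coprime_dvdr _ (k ^ l)).
    by case: (l) lt_al => // l' _; rewrite expnS dvdn_mulr.
  by rewrite subn1 coprimePn // expn_gt0 k_gt0.
rewrite Gauss_dvdl // in dvd_a.
have lt_l : (l < k ^ l)%N by exact: ltn_expl.
case: a lt_al dvd_a => // a lt_al dvd_a.
by have := dvdn_leq (ltn0Sn a) dvd_a; lia.
Qed.

Lemma Zk_dvdZk_all_eq0 d :
  Zk k d -> (forall l : nat, (0 < l)%N -> dvdZk (1 - K ^+ l) d) -> d = 0.
Proof.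
move=> /ZkP [n /intrP [z Ez]] dvd_d.
have [r /ZkP [m /intrP [zr Ezr]] Ed] := dvd_d `|z|.+1 isT.
suff z0 : z = 0.
  by apply/eqP; rewrite -(mulIr_eq0 _ (mulIf (expf_neq0 n K_neq0))) Ez z0.
have E : z * (k ^ m)%:Z = (1 - (k ^ `|z|.+1)%:Z) * zr * (k ^ n)%:Z.
  apply: (@intr_inj rat); rewrite !rmorphM rmorphB rmorph1 /= -Ez -Ezr -!pmulrn !natrX Ed.
  ring.
apply/eqP; rewrite -absz_eq0; apply/eqP/(@dvdn_expn_sub1_small _ `|z|.+1 m) => //.
move/(congr1 absz): E; rewrite !abszM !absz_nat => ->.
rewrite (_ : `|1 - (k ^ `|z|.+1)%:Z|%N = (k ^ `|z|.+1 - 1)%N) ?dvdn_mulr //.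
have : (0 < k ^ `|z|.+1)%N by rewrite expn_gt0; case: k k_ge2.
lia.
Qed.

Lemma BSel_mul x y : BSel k x -> BSel k y -> BSel k (bsmul k x y).
Proof. by move=> Zx Zy; apply/Zk_add/Zk_mul/Zk_expK. Qed.

Lemma BSel_inv x : BSel k x -> BSel k (bsinv k x).
Proof. by move=> Zx; apply/Zk_opp/Zk_mul/Zk_expK. Qed.

Lemma BSel_pow x n : BSel k x -> BSel k (bspow k x n).
Proof.
move=> Zx; have BSel_iter m : BSel k (iter m (bsmul k x) bsone).
  by elim: m => [|m IH]; [exact: (Zk_int 0) | exact: BSel_mul].
by case: n => m; [exact: BSel_iter | exact/BSel_inv/BSel_iter].
Qed.

Lemma bsmul_aa a b : bsmul k (a, 0) (b, 0) = (a + b, 0).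
Proof. by rewrite /bsmul /= oppr0 expr0z mulr1 addr0. Qed.

Lemma bscommE x y : bscomm k x y =
  (x.1 * (K ^ (x.2 + y.2) - K ^ x.2) + y.1 * (K ^ y.2 - K ^ (x.2 + y.2)), 0).
Proof.
case: x y => [a m] [b n]; rewrite /bscomm /bsmul /bsinv /=; congr pair; last by ring.
rewrite !opprK opprD !opprK !expfzDr ?K_neq0 // -!invr_expz.
by have Km_neq0 := expK_neq0 m; field.
Qed.

Lemma bscomm_xa p l t : bscomm k (p, l) (t, 0) = (t * (1 - K ^ l), 0).
Proof. by rewrite bscommE /= addr0 subrr mulr0 add0r expr0z. Qed.

Lemma bscomm_ax s p l : bscomm k (s, 0) (p, l) = (s * (K ^ l - 1), 0).
Proof. by rewrite bscommE /= add0r subrr mulr0 addr0 expr0z. Qed.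

Lemma bspow_a c n : bspow k (c, 0) n = (c * n%:~R, 0).
Proof.
have iter_a m : iter m (bsmul k (c, 0)) bsone = (c * m%:R, 0).
  elim: m => [|m IH]; first by rewrite /= mulr0.
  by rewrite iterS IH bsmul_aa mulrSr mulrDr mulr1 addrC.
case: n => m /=; rewrite iter_a // /bsinv /= expr0z oppr0 NegzE rmorphN /= -pmulrn.
by congr pair; rewrite mulrS; ring.
Qed.

Lemma bspow_b y n : bspow k (y, 1) n = (y * (1 - (K ^ n)^-1) / (1 - K^-1), n).
Proof.
have iter_b m : iter m (bsmul k (y, 1)) bsone = (y * (1 - (K ^+ m)^-1) / (1 - K^-1), m%:Z).
  elim: m => [|m IH]; first by rewrite /= expr0 invr1 subrr mulr0 mul0r.
  rewrite iterS IH /bsmul /=; congr pair; rewrite exprN1 exprS invfM.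
  by have Km_neq0 := expf_neq0 m K_neq0; field; rewrite K_neq0 K_sub1_neq0.
case: n => m; rewrite /bspow iter_b // /bsinv /=; congr pair.
rewrite invrK; change (K ^ m.+1%:Z) with (K ^+ m.+1).
by have Km_neq0 := expf_neq0 m.+1 K_neq0; field; rewrite K_neq0 K_sub1_neq0.
Qed.

Lemma bspow_b2 y n : (bspow k (y, 1) n).2 = n.
Proof. by rewrite bspow_b. Qed.

Lemma bscomm_b_eq1 y h : bscomm k h (y, 1) = bsone <-> h = bspow k (y, 1) h.2.
Proof.
case: h => p n; rewrite bscommE bspow_b /bsone /= expfzDr ?K_neq0 // expr1z.
have := expK_neq0 n; set X := K ^ n => X_neq0.
have XK_neq0 : X * K - X != 0 by rewrite -{2}[X]mulr1 -mulrBr mulf_neq0 ?K_sub1_neq0.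
split=> [[/eqP] | [->]]; last by congr pair; field; rewrite X_neq0 K_neq0 K_sub1_neq0.
rewrite addr_eq0 => /eqP E; congr pair.
rewrite -[p](mulfK XK_neq0) E.
by field; rewrite X_neq0 K_neq0 K_sub1_neq0.
Qed.

Lemma alphaE x : alpha k x <-> x.2 = 0.
Proof.
case: x => a m /=; split=> [|-> z _]; last first.
  by rewrite /bsconj /bsinv /bsmul bscommE /= !addr0 addNr !subrr !mulr0 addr0.
move=> /(_ (1, 0) Zk1); rewrite /bsconj /bsinv /bsmul bscommE /=.
rewrite !oppr0 !add0r !addr0 expr0z !mul1r => -[E].
apply: expK_eq1; apply/eqP; rewrite -subr_eq0 -sqrf_eq0; apply/eqP.
rewrite -oppr0 -{}E expfzDr ?K_neq0 // -invr_expz.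
by have Km_neq0 := expK_neq0 m; field.
Qed.

Lemma beta_b y : beta k (y, 1).
Proof.
case=> c m _ /alphaE /= ->.
rewrite -[iter _ _ _]/(bspow k (c, 0) k) bspow_a -pmulrn.
by rewrite /bsconj /bsinv /bsmul /= !addr0 opprK expr1z; congr pair; ring.
Qed.

Lemma commutator_eqnE v w t c s :
  bscomm k v (t, 0) = bsmul k (bscomm k w (c, 0)) (bscomm k v (bscomm k (s, 0) v)) <->
  t * (1 - K ^ v.2) = c * (1 - K ^ w.2) - s * (1 - K ^ v.2) ^+ 2.
Proof.
case: v w => [p l] [q m]; rewrite bscomm_ax !bscomm_xa bsmul_aa /=.
have -> : c * (1 - K ^ m) - s * (1 - K ^ l) ^+ 2 =
          c * (1 - K ^ m) + s * (K ^ l - 1) * (1 - K ^ l) by ring.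
by split=> [[] | ->].
Qed.

Section Tau.
Variables (gamma : G -> G -> G -> G -> Prop) (c y : rat).
Hypotheses (Zk_c : Zk k c) (Zk_y : Zk k y).
Local Notation b := (y, 1).

Lemma tau_bspow (z : int) :
  (forall l m : int, gamma (bspow k b z) (bspow k b l) (bspow k b m) b -> z * l = m) ->
  tau k gamma (c, 0) (bspow k (c, 0) z) (bspow k b z) b.
Proof.
move=> gamma_mul; rewrite bspow_a; split; first exact/alphaE.
split; first exact/alphaE.
split; first by apply/bscomm_b_eq1; rewrite bspow_b2.
split=> [|v _ w _ /bscomm_b_eq1 Ev /bscomm_b_eq1 Ew]; first exact: beta_b.
rewrite {1}Ev {1}Ew => /gamma_mul zl_m.
have [s Zs E] := commutator_eqn_solvable (expK_neq0 v.2) (Zk_expK _) (Zk_expK_inv _) z Zk_c.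
exists (s, 0); split=> //; split; first exact/alphaE.
by apply/commutator_eqnE; rewrite -zl_m (mulrC z) -exprz_exp -E mulrC.
Qed.

Lemma tau_is_bspow u h : BSel k u -> tau k gamma (c, 0) u h b ->
  (forall n l : int, gamma (bspow k b n) (bspow k b l) (bspow k b (n * l)) b) ->
  exists z : int, u = bspow k (c, 0) z /\ h = bspow k b z.
Proof.
case: u => t m Zt [_ [/alphaE /= -> [/bscomm_b_eq1 Eh [_ tau_uh]]]] gamma_mul.
exists h.2; split=> //; rewrite bspow_a; congr pair; apply/subr0_eq.
apply: Zk_dvdZk_all_eq0 => [|l l_gt0]; first by apply/Zk_sub/Zk_mul/Zk_int.
have cent_pow n : bscomm k (bspow k b n) b = bsone by apply/bscomm_b_eq1; rewrite bspow_b2.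
have gamma_hl : gamma h (bspow k b l) (bspow k b (h.2 * l)) b.
  by rewrite {1}Eh; exact: gamma_mul.
have [[s m'] [Zs [/alphaE m'0 E]]] := tau_uh _ (BSel_pow (x := b) l Zk_y)
  _ (BSel_pow (x := b) (h.2 * l) Zk_y) (cent_pow _) (cent_pow _) gamma_hl.
rewrite /= in m'0; subst m'.
move/commutator_eqnE: E; rewrite !bspow_b2 (mulrC h.2) -exprz_exp.
apply: (dvdZk_of_commutator_eqn (expK_neq0 l) (Zk_expK l) (Zk_expK_inv l) _ Zk_c Zs).
by apply/eqP => /expK_eq1 [l0]; rewrite l0 in l_gt0.
Qed.
End Tau.
End BaumslagSolitar.

Theorem corollary4p9 (k : nat) (hk : (2 <= k)%N)
  (gamma : G -> G -> G -> G -> Prop)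
  (hgamma : forall b1 : G, BSel k b1 -> InAb k b1 ->
     forall n l m : int,
       gamma (bspow k b1 n) (bspow k b1 l) (bspow k b1 m) b1 <-> n * l = m)
  (a1 b1 : G) (ha1 : InA k a1) (hb1 : InAb k b1)
  (u h : G) (hu : BSel k u) (hh : BSel k h) :
  tau k gamma a1 u h b1 <-> exists z : int, u = bspow k a1 z /\ h = bspow k b1 z.
Proof.
have [c [Zk_c ->]] := ha1.
have [y [Zk_y Eb1]] := hb1.
have Eb : b1 = (y, 1) by rewrite Eb1 /bsmul /= mul0r addr0.
have gammaP := hgamma b1 ltac:(by rewrite Eb) hb1; rewrite Eb in gammaP *.
split=> [tau_uh | [z [-> ->]]].
- by apply: (tau_is_bspow hk Zk_c Zk_y hu tau_uh) => n l; apply/gammaP.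
- by apply: (tau_bspow hk Zk_c) => l m /gammaP.
Qed.
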